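(* The map $\alpha\mapsto\mathsf{dark}(\alpha)$ is a bijection from the set of snowy weak compositions to the set $\mathsf{Rook}_+$ of non-attacking rook diagrams. Its inverse sends $R\in\mathsf{Rook}_+$ to the weak composition $\alpha$ with $\alpha_r=0$ if row $r$ of $R$ is empty and $\alpha_r=c$ if $(r,c)\in R$.
   Context: A weak composition is an infinite sequence of nonnegative integers with finitely many positive entries; it is snowy if its positive entries are distinct. A diagram is a finite subset of $\mathbb{Z}_{>0}^2$ ($(r,c)$ in row $r$, row 1 on top, column $c$); it is a non-attacking rook diagram if it has at most one cell in each row and each column. $D(\alpha)=\{(r,c):1\le c\le\alpha_r\}$. For a diagram $D$, $\mathsf{snow}(D)$ is built by iterating through rows from bottom to top: in row $r$ take the rightmost cell $(r,c)\in D$ such that column $c$ contains no dark cloud yet; if it exists label it a dark cloud and add snowflake cells at $(r',c)$ for all $r'<r$ with $(r',c)\notin D$. $\mathsf{dark}(\alpha)$ is the set of dark clouds of $\mathsf{snow}(D(\alpha))$. *)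

From HB Require Import structures.
From mathcomp Require Import all_boot.
From mathcomp Require Import finmap.
Set Implicit Arguments. Unset Strict Implicit. Unset Printing Implicit Defensive.
Local Open Scope fset_scope.

(* A weak composition alpha = (alpha_1, alpha_2, ...) is represented by the
   finite list s with alpha_r = nth 0 s (r-1) for r >= 1 (alpha_r = 0 beyond
   size s).  To make the representation canonical, s has no trailing zero. *)
Definition weak_comp (s : seq nat) : bool := last 1 s != 0.

Definition wc_entry (s : seq nat) (r : nat) : nat := nth 0 s r.-1.

Definition snowy (s : seq nat) : bool := uniq [seq x <- s | 0 < x].

(* Diagrams: finite sets of cells (r, c), row r (row 1 on top), column c,
   with r, c >= 1. *)
Definition diagram (D : {fset (nat * nat)}) : bool :=
  all (fun p : nat * nat => (0 < p.1) && (0 < p.2)) D.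

Definition rook (D : {fset (nat * nat)}) : bool :=
  diagram D &&
  all (fun p : nat * nat => all (fun q : nat * nat =>
        ((p.1 == q.1) ==> (p == q)) && ((p.2 == q.2) ==> (p == q))) D) D.

Definition Dof (s : seq nat) : {fset (nat * nat)} :=
  [fset p in flatten [seq [seq (r, c) | c <- iota 1 (wc_entry s r)]
                     | r <- iota 1 (size s)]].

(* One step of snow(D), processing row r; the state is
   (dark clouds, snowflake cells). *)
Definition snow_step (D : {fset (nat * nat)}) (r : nat)
    (st : {fset (nat * nat)} * {fset (nat * nat)}) :
    {fset (nat * nat)} * {fset (nat * nat)} :=
  let: (dk, sf) := st in
  let used := [seq p.2 | p <- dk] in
  let cand := [seq p.2 | p <- D & (p.1 == r) && (p.2 \notin used)] in
  if cand is [::] then (dk, sf) else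
  let c := \max_(x <- cand) x in
  ((r, c) |` dk,
   sf `|` [fset p in [seq (r', c) | r' <- iota 1 r.-1 & (r', c) \notin D]]).

(* snow(D): iterate through the rows from bottom (largest row index of D)
   to top (row 1).  foldr over iota 1 N processes N first and 1 last. *)
Definition snow (D : {fset (nat * nat)}) : {fset (nat * nat)} * {fset (nat * nat)} :=
  foldr (snow_step D) (fset0, fset0) (iota 1 (\max_(p <- D) p.1)).

Definition dark_clouds (D : {fset (nat * nat)}) : {fset (nat * nat)} := (snow D).1.

Definition dark (s : seq nat) : {fset (nat * nat)} := dark_clouds (Dof s).

Definition rook_to_comp (R : {fset (nat * nat)}) : seq nat :=
  [seq \max_(p <- R | p.1 == r) p.2 | r <- iota 1 (\max_(p <- R) p.1)].

From mathcomp Require Import all_boot finmap zify.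
Set Implicit Arguments. Unset Strict Implicit.
Local Open Scope fset_scope.

(* For a snowy alpha, when row r of D(alpha) is processed its rightmost cell
   (r, alpha_r) lies in a column that no lower row has taken, because the
   positive entries of alpha are distinct; hence dark(alpha) is the graph
   {(r, alpha_r) : alpha_r > 0} of alpha.  Distinctness of the entries is also
   exactly what makes this graph a non-attacking rook diagram, and reading off
   the column of the cell in each row recovers alpha. *)

Lemma eq_bigmax_seq (I : eqType) (r : seq I) (P : pred I) (F : I -> nat) :
  0 < \max_(i <- r | P i) F i ->
  exists2 i, (i \in r) && P i & F i = \max_(i <- r | P i) F i.
Proof.
suff : \max_(i <- r | P i) F i = 0 \/
    exists2 i, (i \in r) && P i & F i = \max_(i <- r | P i) F i.
  by case=> [->|].
rewrite big_seq_cond; elim/big_ind: _ => [|m1 m2 IH1 IH2|i ri_Pi].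
- by left.
- by rewrite /maxn; case: ltnP.
- by right; exists i.
Qed.

Lemma uniq_filter_nth_inj (T : eqType) (a : pred T) (x0 : T) (s : seq T) i j :
  uniq (filter a s) -> i < size s -> j < size s -> a (nth x0 s i) ->
  nth x0 s i = nth x0 s j -> i = j.
Proof.
elim: s i j => [|x s IHs] [|i] [|j] //=; rewrite ?ltnS.
- move=> + _ lt_js ax; rewrite ax cons_uniq => /andP[x_notin _] x_eq.
  by rewrite mem_filter ax x_eq mem_nth in x_notin.
- move=> + lt_is _ ai x_eq; rewrite -x_eq ai cons_uniq => /andP[x_notin _].
  by rewrite mem_filter ai mem_nth in x_notin.
- move=> uniq_as lt_is lt_js ai eq_ij; congr S; apply: IHs eq_ij => //.
  by case: (a x) uniq_as => // /andP[].
Qed.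

Lemma nth_gt0_lt_size (s : seq nat) i : 0 < nth 0 s i -> i < size s.
Proof. by apply: contraTT; rewrite -leqNgt => /(nth_default 0) ->. Qed.

Definition nrows (D : {fset (nat * nat)}) : nat := \max_(p <- D) p.1.

Lemma leq_row_nrows D p : p \in D -> p.1 <= nrows D.
Proof. by move=> pD; apply: (leq_bigmax_seq p). Qed.

Definition row_entry (D : {fset (nat * nat)}) (r : nat) : nat :=
  \max_(p <- D | p.1 == r) p.2.

Lemma row_entry_gt0 D r : 0 < row_entry D r -> exists2 p, p \in D & p.1 = r.
Proof. by case/eq_bigmax_seq => p /andP[pD /eqP p1E] _; exists p. Qed.

Lemma rook_to_compE R : rook_to_comp R = map (row_entry R) (iota 1 (nrows R)).
Proof. by []. Qed.

Lemma rookP (R : {fset (nat * nat)}) :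
  reflect [/\ diagram R, {in R &, forall p q, p.1 = q.1 -> p = q}
            & {in R &, forall p q, p.2 = q.2 -> p = q}] (rook R).
Proof.
apply: (iffP andP) => [[diagR /allP rookR]|[diagR row col]].
  split=> // p q pR qR eq_pq.
    by have /allP/(_ q qR)/andP[/implyP row _] := rookR p pR; apply/eqP/row/eqP.
  by have /allP/(_ q qR)/andP[_ /implyP col] := rookR p pR; apply/eqP/col/eqP.
split=> //; apply/allP => p pR; apply/allP => q qR.
by apply/andP; split; apply/implyP => /eqP eq_pq; apply/eqP; [apply: row|apply: col].
Qed.

Lemma weak_compE s : weak_comp s = (0 < size s) ==> (0 < wc_entry s (size s)).
Proof.
case/lastP: s => [//|t x].
by rewrite /weak_comp /wc_entry last_rcons size_rcons nth_rcons ltnn eqxx -lt0n.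
Qed.

Lemma map_wc_entry_iota s : map (wc_entry s) (iota 1 (size s)) = s.
Proof.
by rewrite -[RHS](mkseq_nth 0) (iotaDl 1 0) -map_comp; exact: eq_map.
Qed.

Lemma snowy_wc_entry_inj s i j : snowy s -> 0 < i -> 0 < j ->
  0 < wc_entry s i -> wc_entry s i = wc_entry s j -> i = j.
Proof.
rewrite /wc_entry => snowy_s i_gt0 j_gt0 si_gt0 eq_sij.
have sj_gt0 : 0 < nth 0 s j.-1 by rewrite -eq_sij.
have := uniq_filter_nth_inj snowy_s (nth_gt0_lt_size si_gt0)
  (nth_gt0_lt_size sj_gt0) si_gt0 eq_sij.
lia.
Qed.

Definition rook_of (s : seq nat) : {fset (nat * nat)} :=
  [fset p in [seq (r, wc_entry s r) | r <- iota 1 (size s) & 0 < wc_entry s r]].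

Lemma mem_rook_of s p :
  (p \in rook_of s) = [&& 0 < p.1, 0 < wc_entry s p.1 & p.2 == wc_entry s p.1].
Proof.
rewrite /rook_of in_fset; apply/mapP/and3P => [[r] | [r_gt0 sr_gt0 /eqP p2E]].
  by rewrite mem_filter mem_iota => /andP[sr_gt0 /andP[r_gt0 _]] ->.
exists p.1; last by rewrite -p2E -surjective_pairing.
rewrite mem_filter mem_iota sr_gt0 r_gt0 /= add1n -[p.1](prednK r_gt0) ltnS.
exact: nth_gt0_lt_size.
Qed.

Lemma rook_rook_of s : snowy s -> rook (rook_of s).
Proof.
move=> snowy_s; apply/rookP; split.
- by apply/allP => p; rewrite mem_rook_of => /and3P[-> ? /eqP ->].
- move=> [r c] [r' c']; rewrite !mem_rook_of /=.
  by move=> /and3P[_ _ /eqP ->] /and3P[_ _ /eqP ->] <-.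
- move=> [r c] [r' c']; rewrite !mem_rook_of /=.
  move=> /and3P[r_gt0 sr_gt0 /eqP ->] /and3P[r'_gt0 _ /eqP ->] eq_s.
  by rewrite (snowy_wc_entry_inj snowy_s r_gt0 r'_gt0 sr_gt0 eq_s).
Qed.

Lemma row_entry_rook_of s r : 0 < r -> row_entry (rook_of s) r = wc_entry s r.
Proof.
move=> r_gt0; apply/eqP; rewrite eqn_leq; apply/andP; split.
  by apply/bigmax_leqP_seq => p /[!mem_rook_of] /and3P[_ _ /eqP ->] /eqP ->.
have [->//|sr_gt0] := posnP (wc_entry s r).
apply: (leq_bigmax_seq (r, wc_entry s r)) => //.
by rewrite mem_rook_of r_gt0 sr_gt0 eqxx.
Qed.

Lemma nrows_rook_of s : weak_comp s -> nrows (rook_of s) = size s.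
Proof.
move=> wc_s; apply/eqP; rewrite eqn_leq; apply/andP; split.
  apply/bigmax_leqP_seq => p /[!mem_rook_of] /and3P[p1_gt0 sp_gt0 _] _.
  by rewrite -(prednK p1_gt0); apply: nth_gt0_lt_size.
have [->//|size_gt0] := posnP (size s).
move: wc_s; rewrite weak_compE size_gt0 => /= s_gt0.
apply: (leq_bigmax_seq (size s, wc_entry s (size s))) => //.
by rewrite mem_rook_of /= size_gt0 s_gt0 eqxx.
Qed.

Lemma rook_ofK s : weak_comp s -> rook_to_comp (rook_of s) = s.
Proof.
move=> wc_s; rewrite rook_to_compE nrows_rook_of // -[RHS]map_wc_entry_iota.
by apply/eq_in_map => r /[!mem_iota] /andP[r_gt0 _]; apply: row_entry_rook_of.
Qed.

Lemma wc_entry_rook_to_comp D r :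
  0 < r -> wc_entry (rook_to_comp D) r = row_entry D r.
Proof.
move=> r_gt0; rewrite /wc_entry rook_to_compE.
have [lt_r|ge_r] := ltnP r.-1 (nrows D).
  by rewrite (nth_map 0) ?size_iota // nth_iota // add1n prednK.
rewrite nth_default ?size_map ?size_iota //; apply/esym/eqP; rewrite -leqn0.
apply/bigmax_leqP_seq => p pD /eqP p1E.
by have := leq_row_nrows pD; rewrite p1E; lia.
Qed.

Lemma weak_comp_rook_to_comp D : diagram D -> weak_comp (rook_to_comp D).
Proof.
move=> /allP diagD; rewrite weak_compE rook_to_compE size_map size_iota.
apply/implyP => nrows_gt0; rewrite wc_entry_rook_to_comp //.
have [p /andP[pD _] p1E] := eq_bigmax_seq nrows_gt0.
rewrite -[nrows D]p1E; case/andP: (diagD p pD) => _ p2_gt0.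
by apply: leq_trans p2_gt0 _; apply: (leq_bigmax_seq p).
Qed.

Section RookToComp.

Variable R : {fset (nat * nat)}.
Hypothesis rookR : rook R.

Lemma row_entry_rook p : p \in R -> row_entry R p.1 = p.2.
Proof.
case/rookP: rookR => _ row_inj _ pR; apply/eqP; rewrite eqn_leq; apply/andP; split.
  by apply/bigmax_leqP_seq => q qR /eqP q1E; rewrite (row_inj q p).
exact: (leq_bigmax_seq p).
Qed.

Lemma snowy_rook_to_comp : snowy (rook_to_comp R).
Proof.
case/rookP: rookR => _ _ col_inj.
rewrite /snowy rook_to_compE filter_map map_inj_in_uniq ?filter_uniq ?iota_uniq //.
move=> r r' /[!mem_filter] /andP[/= /row_entry_gt0[p pR <-] _].
move=> /andP[/= /row_entry_gt0[q qR <-] _].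
by rewrite !row_entry_rook // => /col_inj ->.
Qed.

Lemma rook_to_compK : rook_of (rook_to_comp R) = R.
Proof.
case/rookP: rookR => /allP diagR _ _.
apply/fsetP => -[r c]; rewrite mem_rook_of /=.
apply/and3P/idP => [[r_gt0] | rcR].
  rewrite wc_entry_rook_to_comp // => /row_entry_gt0[p pR <-] /eqP ->.
  by rewrite row_entry_rook // -surjective_pairing.
have /andP[/= r_gt0 c_gt0] := diagR _ rcR.
by rewrite wc_entry_rook_to_comp // (row_entry_rook rcR) c_gt0.
Qed.

End RookToComp.

Lemma mem_Dof s p :
  (p \in Dof s) = [&& 0 < p.1, p.1 <= size s, 0 < p.2 & p.2 <= wc_entry s p.1].
Proof.
case: p => r c; rewrite /Dof in_fset /=; apply/flattenP/and4P.
  case=> _ /mapP[r' + ->] /mapP[c' + [-> ->]].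
  by rewrite !mem_iota => /andP[r_gt0 r_le] /andP[c_gt0 c_le]; split; lia.
case=> r_gt0 r_le c_gt0 c_le; exists [seq (r, c') | c' <- iota 1 (wc_entry s r)].
  by apply/mapP; exists r; rewrite // mem_iota; lia.
by apply/mapP; exists c; rewrite // mem_iota; lia.
Qed.

Lemma rook_of_sub_Dof s : {subset rook_of s <= Dof s}.
Proof.
move=> p; rewrite mem_rook_of mem_Dof => /and3P[p1_gt0 sp_gt0 /eqP ->].
by rewrite p1_gt0 sp_gt0 leqnn -(prednK p1_gt0) nth_gt0_lt_size.
Qed.

Lemma snow_step_dark_cell (D : {fset nat * nat}) r c
    (st : {fset nat * nat} * {fset nat * nat}) :
  (r, c) \in D -> (forall c', (r, c') \in D -> c' <= c) ->
  c \notin [seq p.2 | p <- st.1] ->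
  (snow_step D r st).1 = (r, c) |` st.1.
Proof.
case: st => dk sf rcD c_max /= c_free.
set cand := [seq _ | _ <- _ & _].
have c_cand : c \in cand.
  by apply/mapP; exists (r, c); rewrite ?mem_filter /= ?eqxx ?c_free.
have -> : \max_(x <- cand) x = c.
  apply/eqP; rewrite eqn_leq (leq_bigmax_seq c) // andbT.
  apply/bigmax_leqP_seq => _ /mapP[[r' c'] + ->] _.
  by rewrite mem_filter /= => /andP[/andP[/eqP-> _]]; apply: c_max.
by case: cand c_cand.
Qed.

Lemma snow_step_dark_empty (D : {fset nat * nat}) r
    (st : {fset nat * nat} * {fset nat * nat}) :
  (forall c, (r, c) \notin D) -> (snow_step D r st).1 = st.1.
Proof.
case: st => dk sf row_empty /=.
case E: [seq _ <- _ | _] => [//|p l].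
have : p \in [seq p <- D | (p.1 == r) && (p.2 \notin [seq q.2 | q <- dk])].
  by rewrite E mem_head.
rewrite mem_filter => /andP[/andP[/eqP p1E _] pD].
by have := row_empty p.2; rewrite -p1E -surjective_pairing pD.
Qed.

Lemma mem_snow_dark_iota s m n p : snowy s -> 0 < m ->
  (p \in (foldr (snow_step (Dof s)) (fset0, fset0) (iota m n)).1) =
  (p \in rook_of s) && (m <= p.1 < m + n).
Proof.
move=> snowy_s; elim: n m p => [|n IHn] m p m_gt0.
  by rewrite in_fset0 addn0; case: leqP; rewrite ?andbF // => /ltnW->.
have mE q : q \in rook_of s -> q.1 = m -> q = (m, wc_entry s m).
  by case: q => r c; rewrite mem_rook_of => /and3P[_ _ /eqP /= ->] ->.
rewrite [iota _ _]/= [foldr _ _ _]/=.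
have [sm_eq0|sm_gt0] := posnP (wc_entry s m).
  rewrite snow_step_dark_empty; last by case=> [|c]; rewrite mem_Dof sm_eq0 /= !andbF.
  rewrite IHn //; case pR: (p \in rook_of s) => //=.
  have p1_ne : p.1 != m.
    by apply/eqP => /(mE p pR) pE; move: pR; rewrite pE mem_rook_of sm_eq0 andbF.
  by rewrite addSnnS ltn_neqAle eq_sym (negbTE p1_ne).
have mR : (m, wc_entry s m) \in rook_of s by rewrite mem_rook_of m_gt0 sm_gt0 eqxx.
rewrite (snow_step_dark_cell (c := wc_entry s m)).
- rewrite in_fset1U IHn //; case: (eqVneq p (m, wc_entry s m)) => [->|p_ne] /=.
    by rewrite mR leqnn addnS ltnS leq_addr.
  case pR: (p \in rook_of s) => //=.
  have p1_ne : p.1 != m by apply: contra_neq p_ne => /(mE p pR).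
  by rewrite addSnnS ltn_neqAle eq_sym (negbTE p1_ne).
- exact: rook_of_sub_Dof.
- by move=> c; rewrite mem_Dof => /and4P[].
- apply/mapP => -[q]; rewrite IHn // => /andP[qR /andP[m_lt _]] col_eq.
  case/rookP: (rook_rook_of snowy_s) => _ _ col_inj.
  by move: m_lt; rewrite (col_inj _ _ qR mR (esym col_eq)) ltnn.
Qed.

Lemma dark_snowy s : snowy s -> dark s = rook_of s.
Proof.
move=> snowy_s; apply/fsetP => p.
rewrite /dark /dark_clouds /snow mem_snow_dark_iota //.
case pR: (p \in rook_of s) => //=.
have p1_gt0 : 0 < p.1 by move: pR; rewrite mem_rook_of => /andP[].
by rewrite p1_gt0 add1n ltnS (leq_row_nrows (rook_of_sub_Dof pR)).
Qed.

Theorem lemma4p20 :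
  (* dark maps snowy weak compositions into Rook_+ *)
  (forall s : seq nat, weak_comp s -> snowy s -> rook (dark s)) /\
  (* dark is injective on snowy weak compositions *)
  (forall s t : seq nat, weak_comp s -> snowy s -> weak_comp t -> snowy t ->
     dark s = dark t -> s = t) /\
  (* the explicit inverse: for R in Rook_+, rook_to_comp R is a snowy weak
     composition with dark (rook_to_comp R) = R (hence dark is surjective) *)
  (forall R : {fset (nat * nat)}, rook R ->
     weak_comp (rook_to_comp R) /\ snowy (rook_to_comp R) /\
     dark (rook_to_comp R) = R) /\
  (* and rook_to_comp is a left inverse of dark on snowy weak compositions *)
  (forall s : seq nat, weak_comp s -> snowy s -> rook_to_comp (dark s) = s).
Proof.
split; [|split; [|split]].
- by move=> s _ snowy_s; rewrite dark_snowy //; apply: rook_rook_of.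
- move=> s t wc_s snowy_s wc_t snowy_t; rewrite !dark_snowy // => eq_st.
  by rewrite -(rook_ofK wc_s) eq_st rook_ofK.
- move=> R rookR; have snowy_R := snowy_rook_to_comp rookR.
  rewrite dark_snowy // rook_to_compK //; split=> //.
  by apply: weak_comp_rook_to_comp; case/andP: rookR.
- by move=> s wc_s snowy_s; rewrite dark_snowy // rook_ofK.
Qed.
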